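(* Assume $\boldsymbol\Gamma$ is irreducible. Then the largest eigenvalue of $\boldsymbol\Theta-\boldsymbol\Psi$, denoted $-\mu$, is simple and admits a unit eigenvector $\mathbf W=(W_{jl})_{(j,l)\in\mathcal T_N}$ with all components strictly positive. Let $\mathbf S(z)=\exp\big((\boldsymbol\Theta-\boldsymbol\Psi)z\big)\mathbf S(0)$ with $\mathbf S(0)\in[0,\infty)^{\mathcal T_N}\setminus\{0\}$. Then, with $c_W=\sum_{(j,l)\in\mathcal T_N}W_{jl}S_{jl}(0)>0$, $$\mathbf S(z)=c_W\mathbf We^{-\mu z}\big(1+o(1)\big)\quad\text{as }z\to+\infty .$$ In particular, if $S_{jl}(0)=(2-\delta_{jl})q_jq_l$ for some $\mathbf q\in[0,\infty)^N\setminus\{0\}$ (the initial second moments $R_{jl}(0)=q_jq_l$), then $c_W=\sum_{j,l=0}^{N-1}W_{jl}q_jq_l$ (with $W_{jl}:=W_{lj}$ for $j>l$).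
   Context: Let $N\ge 2$. Let $\boldsymbol\Gamma=(\Gamma_{jl})_{j,l=0}^{N-1}$ be a real symmetric matrix with $\Gamma_{jl}\ge 0$ for $j\neq l$ and $\Gamma_{jj}=-\sum_{l\neq j}\Gamma_{jl}$. $\boldsymbol\Gamma$ is called irreducible if the graph on $\{0,\dots,N-1\}$ with an edge between $j\neq l$ whenever $\Gamma_{jl}>0$ is connected. Let $\Lambda_0,\dots,\Lambda_{N-1}\ge 0$. Let $\mathcal T_N=\{(j,l)\in\mathbb N^2:0\le j\le l\le N-1\}$. For $\mathbf S=(S_{jl})_{(j,l)\in\mathcal T_N}$ use the convention that $S_{jl}$ with $j>l$ means $S_{lj}$. Define linear maps on $\mathbb R^{\mathcal T_N}$ by $(\boldsymbol\Psi\mathbf S)_{jl}=(\Lambda_j+\Lambda_l)S_{jl}$ and $$(\boldsymbol\Theta\mathbf S)_{jl}=2\Gamma_{jl}\mathbf 1_{j\neq l}(S_{jj}+S_{ll}-2S_{jl})+\sum_{n\notin\{j,l\}}\big[\Gamma_{ln}(S_{jn}-S_{jl})+\Gamma_{jn}(S_{nl}-S_{jl})\big].$$ The vector $\mathbf S$ encodes second moments $R_{jl}=\mathbb E[P_jP_l]$ of mode powers via $S_{jl}=2R_{jl}$ for $j<l$ and $S_{jj}=R_{jj}$; $\mathbf S$ solves $\partial_z\mathbf S=(\boldsymbol\Theta-\boldsymbol\Psi)\mathbf S$. *)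

From Stdlib Require Import Reals Lra Lia Arith.
Open Scope R_scope.

(* Vectors indexed by T_N = {(j,l) : 0 <= j <= l <= N-1}; represented as
   functions nat -> nat -> R, only the entries with j <= l < N matter. *)
Definition vec := nat -> nat -> R.

Definition inT (N j l : nat) : Prop := (j <= l < N)%nat.

Fixpoint sumN (n : nat) (f : nat -> R) : R :=
  match n with
  | O => 0
  | Datatypes.S k => sumN k f + f k
  end.

Definition sumT (N : nat) (f : nat -> nat -> R) : R :=
  sumN N (fun l => sumN (l + 1) (fun j => f j l)).

(* convention: S_{jl} with j > l means S_{lj} *)
Definition Sget (S : vec) (j l : nat) : R :=
  if Nat.leb j l then S j l else S l j.

Definition Theta (N : nat) (G : nat -> nat -> R) (S : vec) : vec :=
  fun j l =>
    2 * G j l * (if Nat.eqb j l then 0 else 1)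
      * (Sget S j j + Sget S l l - 2 * Sget S j l)
    + sumN N (fun n =>
        if (Nat.eqb n j || Nat.eqb n l)%bool then 0
        else G l n * (Sget S j n - Sget S j l)
             + G j n * (Sget S n l - Sget S j l)).

Definition Psi (Lam : nat -> R) (S : vec) : vec :=
  fun j l => (Lam j + Lam l) * S j l.

Definition Aop (N : nat) (G : nat -> nat -> R) (Lam : nat -> R) (S : vec) : vec :=
  fun j l => Theta N G S j l - Psi Lam S j l.

Definition eqT (N : nat) (u v : vec) : Prop :=
  forall j l, inT N j l -> u j l = v j l.

Definition dimT (N : nat) : nat := Nat.div (N * (N + 1)) 2.

Fixpoint opow (k : nat) (F : vec -> vec) (v : vec) : vec :=
  match k with
  | O => v
  | Datatypes.S k' => F (opow k' F v)
  end.

(* a + i b is a (complex) eigenvalue of the real linear map A on R^{T_N}: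
   there is a nonzero complex vector u + i v with A(u+iv) = (a+ib)(u+iv). *)
Definition is_eigenvalue (N : nat) (A : vec -> vec) (a b : R) : Prop :=
  exists u v : vec,
    (exists j l, inT N j l /\ (u j l <> 0 \/ v j l <> 0)) /\
    eqT N (A u) (fun j l => a * u j l - b * v j l) /\
    eqT N (A v) (fun j l => b * u j l + a * v j l).

(* lam (real) is an eigenvalue of A with algebraic multiplicity one and
   eigenvector W: the generalized eigenspace ker (A - lam)^{|T_N|} is
   spanned by W. *)
Definition simple_eigen (N : nat) (A : vec -> vec) (lam : R) (W : vec) : Prop :=
  (exists j l, inT N j l /\ W j l <> 0) /\
  eqT N (A W) (fun j l => lam * W j l) /\
  (forall v : vec,
     eqT N (opow (dimT N) (fun x j l => A x j l - lam * x j l) v) (fun _ _ => 0) ->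
     exists c : R, eqT N v (fun j l => c * W j l)).

(* connectivity of the graph with edges {j,l}, j<>l, Gamma_{jl} > 0 *)
Inductive reach (N : nat) (G : nat -> nat -> R) : nat -> nat -> Prop :=
  | reach_refl j : reach N G j j
  | reach_step j k l : (j < N)%nat -> (k < N)%nat -> j <> k -> 0 < G j k ->
      reach N G k l -> reach N G j l.

Definition irreducible (N : nat) (G : nat -> nat -> R) : Prop :=
  forall j l, (j < N)%nat -> (l < N)%nat -> reach N G j l.

Definition kdelta (j l : nat) : R := if Nat.eqb j l then 1 else 0.

(* Everything rests on three properties of A = Theta - Psi with respect to the
   inner product <u, v> = sum_{(j,l) in T_N} u_jl v_jl: A is symmetric,
   cooperative (nonnegative off-diagonal part) and, for irreducible Gamma,
   irreducible. *)

From Stdlib Require Import Reals Lra Lia.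
From mathcomp Require all_boot all_order all_algebra.
From mathcomp Require Rstruct ring lra.
Open Scope R_scope.

Lemma sumN_ext n f g : (forall i, (i < n)%nat -> f i = g i) -> sumN n f = sumN n g.
Proof.
induction n as [|n IH]; intros H; simpl; auto.
rewrite IH by (intros; apply H; lia). rewrite (H n) by lia. auto.
Qed.

Lemma sumN_lin n f g c d :
  sumN n (fun i => c * f i + d * g i) = c * sumN n f + d * sumN n g.
Proof. induction n as [|n IH]; simpl; [ring|]. rewrite IH. ring. Qed.

Lemma sumN_add n f g : sumN n (fun i => f i + g i) = sumN n f + sumN n g.
Proof. induction n as [|n IH]; simpl; [ring|]. rewrite IH; ring. Qed.

Lemma sumN_scal n f c : sumN n (fun i => c * f i) = c * sumN n f.
Proof. induction n as [|n IH]; simpl; [ring|]. rewrite IH; ring. Qed.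

Lemma sumN_0 n : sumN n (fun _ => 0) = 0.
Proof. induction n as [|n IH]; simpl; auto. rewrite IH; ring. Qed.

Lemma sumN_exch n m f :
  sumN n (fun i => sumN m (fun j => f i j)) = sumN m (fun j => sumN n (fun i => f i j)).
Proof.
induction n as [|n IH]; simpl; [symmetry; apply sumN_0|].
rewrite IH, <- sumN_add. auto.
Qed.

Lemma sumN_ge0 n f : (forall i, (i < n)%nat -> 0 <= f i) -> 0 <= sumN n f.
Proof.
induction n as [|n IH]; intros H; simpl; [lra|].
assert (0 <= f n) by (apply H; lia).
assert (0 <= sumN n f) by (apply IH; intros; apply H; lia). lra.
Qed.

Lemma sumN_term n f i :
  (forall k, (k < n)%nat -> 0 <= f k) -> (i < n)%nat -> f i <= sumN n f.
Proof.
induction n as [|n IH]; intros H Hi; simpl; [lia|].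
assert (0 <= f n) by (apply H; lia).
assert (0 <= sumN n f) by (apply sumN_ge0; intros; apply H; lia).
destruct (Nat.eq_dec i n) as [->|Hn]; [lra|].
assert (f i <= sumN n f) by (apply IH; [intros; apply H; lia | lia]). lra.
Qed.

Lemma sumN_eq0 n f :
  (forall i, (i < n)%nat -> 0 <= f i) -> sumN n f = 0 -> forall i, (i < n)%nat -> f i = 0.
Proof. intros H H0 i Hi. pose proof (sumN_term n f i H Hi). pose proof (H i Hi). lra. Qed.

Lemma sumN_delta n (f : nat -> R) a :
  sumN n (fun i => if Nat.eqb i a then f i else 0) = if Nat.ltb a n then f a else 0.
Proof.
induction n as [|n IH]; simpl; auto. rewrite IH.
destruct (Nat.eqb_spec n a) as [->|h].
- replace (Nat.ltb a a) with false by (symmetry; apply Nat.ltb_ge; lia).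
  replace (Nat.ltb a (S a)) with true by (symmetry; apply Nat.ltb_lt; lia). ring.
- destruct (Nat.ltb_spec a n), (Nat.ltb_spec a (S n)); try lia; ring.
Qed.

Lemma sumN_omit1 n f a : (a < n)%nat ->
  sumN n (fun i => if Nat.eqb i a then 0 else f i) = sumN n f - f a.
Proof.
intros Ha.
transitivity (sumN n (fun i => 1 * f i + (-1) * (if Nat.eqb i a then f i else 0))).
{ apply sumN_ext; intros i _. destruct (Nat.eqb i a); ring. }
rewrite sumN_lin, sumN_delta.
replace (Nat.ltb a n) with true by (symmetry; apply Nat.ltb_lt; auto). ring.
Qed.

Lemma sumN_omit2 n f a b : (a < n)%nat -> (b < n)%nat -> a <> b ->
  sumN n (fun i => if (Nat.eqb i a || Nat.eqb i b)%bool then 0 else f i)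
  = sumN n f - f a - f b.
Proof.
intros Ha Hb Hab.
transitivity (sumN n (fun i => if Nat.eqb i a then 0 else (if Nat.eqb i b then 0 else f i))).
{ apply sumN_ext; intros i _. destruct (Nat.eqb i a), (Nat.eqb i b); auto. }
rewrite sumN_omit1, sumN_omit1 by auto.
replace (Nat.eqb a b) with false by (symmetry; apply Nat.eqb_neq; auto). ring.
Qed.

Lemma sumT_ext N f g : (forall j l, inT N j l -> f j l = g j l) -> sumT N f = sumT N g.
Proof.
intros H; unfold sumT; apply sumN_ext; intros l Hl; apply sumN_ext; intros j Hj.
apply H; unfold inT; lia.
Qed.

Lemma sumT_lin N f g c d :
  sumT N (fun j l => c * f j l + d * g j l) = c * sumT N f + d * sumT N g.
Proof. unfold sumT. rewrite <- sumN_lin. apply sumN_ext; intros. apply sumN_lin. Qed.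

Lemma sumT_0 N : sumT N (fun _ _ => 0) = 0.
Proof.
unfold sumT. transitivity (sumN N (fun _ => 0)); [|apply sumN_0].
apply sumN_ext; intros; apply sumN_0.
Qed.

Lemma sumT_ge0 N f : (forall j l, inT N j l -> 0 <= f j l) -> 0 <= sumT N f.
Proof.
intros H; unfold sumT; apply sumN_ge0; intros l Hl; apply sumN_ge0; intros j Hj.
apply H; unfold inT; lia.
Qed.

Lemma sumT_term N f j l :
  (forall a b, inT N a b -> 0 <= f a b) -> inT N j l -> f j l <= sumT N f.
Proof.
intros H [Hj Hl]. unfold sumT.
apply Rle_trans with (sumN (l + 1) (fun j0 => f j0 l)).
- apply (sumN_term (l + 1) (fun j0 => f j0 l)); [intros; apply H; unfold inT|]; lia.
- apply (sumN_term N (fun l0 => sumN (l0 + 1) (fun j0 => f j0 l0))); [|lia].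
  intros k Hk; apply sumN_ge0; intros; apply H; unfold inT; lia.
Qed.

Lemma sumT_pos N f : (forall a b, inT N a b -> 0 <= f a b) ->
  (exists j l, inT N j l /\ 0 < f j l) -> 0 < sumT N f.
Proof. intros H [j [l [Hjl Hp]]]. pose proof (sumT_term N f j l H Hjl). lra. Qed.

Lemma sumN_square_sym N f : (forall j l, (j < N)%nat -> (l < N)%nat -> f j l = f l j) ->
  sumN N (fun j => sumN N (fun l => f j l)) = 2 * sumT N f - sumN N (fun j => f j j).
Proof.
induction N as [|N IH]; intros H; unfold sumT in *; simpl; [ring|].
rewrite sumN_add, IH by (intros; apply H; lia).
assert (E : sumN N (fun l => f N l) = sumN N (fun j => f j N))
  by (apply sumN_ext; intros; apply H; lia).
rewrite E, Nat.add_1_r. simpl. ring.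
Qed.

Definition ipT N (u v : vec) : R := sumT N (fun j l => u j l * v j l).

Definition linT N (M : vec -> vec) : Prop :=
  (forall u v j l, inT N j l -> M (fun a b => u a b + v a b) j l = M u j l + M v j l) /\
  (forall c u j l, inT N j l -> M (fun a b => c * u a b) j l = c * M u j l) /\
  (forall u v, eqT N u v -> forall j l, inT N j l -> M u j l = M v j l).

Definition symT N (M : vec -> vec) : Prop := forall u v, ipT N u (M v) = ipT N (M u) v.

Definition eigvec N (M : vec -> vec) (lam : R) (v : vec) : Prop :=
  eqT N (M v) (fun j l => lam * v j l).

Definition nonzeroT N (v : vec) : Prop := exists j l, inT N j l /\ v j l <> 0.

Definition rayleigh_bound N (M : vec -> vec) (lam : R) : Prop :=
  forall x, ipT N x (M x) <= lam * ipT N x x.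

Section InnerProduct.
Variable N : nat.
Notation ip := (ipT N).

Lemma ip_sym u v : ip u v = ip v u.
Proof. unfold ipT; apply sumT_ext; intros; ring. Qed.

Lemma ip_ext u u' v v' : eqT N u u' -> eqT N v v' -> ip u v = ip u' v'.
Proof. intros H1 H2; unfold ipT; apply sumT_ext; intros j l H; rewrite H1, H2 by auto; auto. Qed.

Lemma ip_lin_r u v w c d : ip u (fun a b => c * v a b + d * w a b) = c * ip u v + d * ip u w.
Proof. unfold ipT. rewrite <- sumT_lin. apply sumT_ext; intros; ring. Qed.

Lemma ip_lin_l u v w c d : ip (fun a b => c * v a b + d * w a b) u = c * ip v u + d * ip w u.
Proof. unfold ipT. rewrite <- sumT_lin. apply sumT_ext; intros; ring. Qed.

Lemma ip_scal_r u v c : ip u (fun a b => c * v a b) = c * ip u v.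
Proof.
rewrite (ip_ext u u _ (fun a b => c * v a b + 0 * v a b)) by (intros ? ? ?; ring).
rewrite ip_lin_r. ring.
Qed.

Lemma ip_scal_l u v c : ip (fun a b => c * v a b) u = c * ip v u.
Proof. rewrite ip_sym, ip_scal_r, ip_sym. auto. Qed.

Lemma ip_add_r u v w : ip u (fun a b => v a b + w a b) = ip u v + ip u w.
Proof.
rewrite (ip_ext u u _ (fun a b => 1 * v a b + 1 * w a b)) by (intros ? ? ?; ring).
rewrite ip_lin_r. ring.
Qed.

Lemma ip_eigvec M lam z : eigvec N M lam z -> ip z (M z) = lam * ip z z.
Proof. intros H. rewrite (ip_ext z z (M z) _ (fun _ _ _ => eq_refl) H). apply ip_scal_r. Qed.

Lemma nrm_ge0 u : 0 <= ip u u.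
Proof. unfold ipT; apply sumT_ge0; intros; nra. Qed.

Lemma nrm_eq0 u : ip u u = 0 -> eqT N u (fun _ _ => 0).
Proof.
intros H j l Hjl.
assert (u j l * u j l <= 0).
{ rewrite <- H. apply (sumT_term N (fun j l => u j l * u j l)); auto. intros; nra. }
nra.
Qed.

Lemma nrm_pos u : nonzeroT N u -> 0 < ip u u.
Proof.
intros [j [l [H H']]]. unfold ipT. apply sumT_pos; [intros; nra|].
exists j, l; split; auto. nra.
Qed.

Lemma nrm_abs z : ip (fun a b => Rabs (z a b)) (fun a b => Rabs (z a b)) = ip z z.
Proof.
unfold ipT; apply sumT_ext; intros.
rewrite <- Rabs_mult. apply Rabs_right, Rle_ge. nra.
Qed.

Lemma lin_comb M u v c d j l : linT N M -> inT N j l ->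
  M (fun a b => c * u a b + d * v a b) j l = c * M u j l + d * M v j l.
Proof.
intros [hA [hZ _]] H. rewrite (hA (fun a b => c * u a b) (fun a b => d * v a b)) by auto.
rewrite hZ, hZ by auto. auto.
Qed.

Lemma lin_ext M u v j l : linT N M -> eqT N u v -> inT N j l -> M u j l = M v j l.
Proof. intros [_ [_ hE]] H H'. apply hE; auto. Qed.

Lemma lin_zero M j l : linT N M -> inT N j l -> M (fun _ _ => 0) j l = 0.
Proof.
intros hM H. rewrite (lin_ext M _ (fun a b => 0 * (fun _ _ => 0) a b) j l hM) by
  (auto; intros ? ? ?; ring).
destruct hM as [_ [hZ _]]. rewrite hZ by auto. ring.
Qed.
End InnerProduct.

(* For a symmetric real matrix M, the least upper bound
   l of the Rayleigh quotient x M x^T / x x^T is an eigenvalue: otherwise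
   l - M would be positive semidefinite and invertible, hence coercive, and
   l - 1/C would be a smaller upper bound. *)
Module Rayleigh.
Import all_boot all_order all_algebra Rstruct ring lra.
Import GRing.Theory Num.Theory Order.TTheory.
Local Set Implicit Arguments.
Local Unset Strict Implicit.
Local Unset Printing Implicit Defensive.
Local Open Scope ring_scope.

Definition qf n (M : 'M[R]_n) (x : 'rV[R]_n) : R := (x *m M *m x^T) 0 0.
Definition bf n (M : 'M[R]_n) (u v : 'rV[R]_n) : R := (u *m M *m v^T) 0 0.

Definition mxl1 n (M : 'M[R]_n) : R := \sum_(i < n) \sum_(j < n) `|M i j|.

Lemma qfE n (M : 'M[R]_n) x :
  qf M x = \sum_(i < n) \sum_(j < n) x 0 i * M i j * x 0 j.
Proof.
rewrite /qf mxE exchange_big /=; apply: eq_bigr => j _.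
by rewrite !mxE big_distrl /=.
Qed.

Lemma qf1E n (x : 'rV[R]_n) : qf 1%:M x = \sum_(i < n) x 0 i ^+ 2.
Proof. rewrite /qf mulmx1 mxE; apply: eq_bigr => i _; by rewrite !mxE expr2. Qed.

Lemma qf1_ge0 n (x : 'rV[R]_n) : 0 <= qf 1%:M x.
Proof. rewrite qf1E; apply: sumr_ge0 => i _; exact: sqr_ge0. Qed.

Lemma qf1_eq0 n (x : 'rV[R]_n) : qf 1%:M x = 0 -> x = 0.
Proof.
rewrite qf1E => /eqP; rewrite psumr_eq0 => [/allP H|i _]; last exact: sqr_ge0.
apply/rowP => i; rewrite mxE; apply/eqP; rewrite -sqrf_eq0.
exact: (H i (mem_index_enum i)).
Qed.

Lemma qf0 n (M : 'M[R]_n) : qf M 0 = 0.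
Proof. by rewrite /qf !mul0mx mxE. Qed.

Lemma mxl1_ge0 n (M : 'M[R]_n) : 0 <= mxl1 M.
Proof. by apply: sumr_ge0 => i _; apply: sumr_ge0 => j _; exact: normr_ge0. Qed.

(* |x M x^T| <= |M|_1 |x|^2, from |x_i x_j| <= |x|^2. *)
Lemma qf_bound n (M : 'M[R]_n) x : `|qf M x| <= mxl1 M * qf 1%:M x.
Proof.
rewrite qfE qf1E /mxl1 big_distrl /=.
apply: (le_trans (ler_norm_sum _ _ _)); apply: ler_sum => i _.
rewrite big_distrl /=.
apply: (le_trans (ler_norm_sum _ _ _)); apply: ler_sum => j _.
set s := \sum_k _.
have sq_le : forall k, x 0 k ^+ 2 <= s.
  by move=> k; rewrite /s (bigD1 k) //= lerDl; apply: sumr_ge0 => ? _; exact: sqr_ge0.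
have prod_le : `|x 0 i| * `|x 0 j| <= s.
  have := sq_le i; have := sq_le j; have := sqr_ge0 (`|x 0 i| - `|x 0 j|).
  rewrite -(real_normK (num_real (x 0 i))) -(real_normK (num_real (x 0 j))) !expr2.
  nra.
rewrite !normrM mulrAC mulrC; apply: ler_wpM2l => //.
Qed.

Lemma bf_sym n (M : 'M[R]_n) u v : M^T = M -> bf M u v = bf M v u.
Proof.
move=> sM; rewrite /bf.
have tr11 : forall A : 'M[R]_1, A 0 0 = (A^T) 0 0 by move=> A; rewrite mxE.
by rewrite tr11 !trmx_mul trmxK sM mulmxA.
Qed.

Lemma qf_expand n (M : 'M[R]_n) y x t : M^T = M ->
  qf M (y + t *: x) = qf M y + 2 * t * bf M y x + t ^+ 2 * qf M x.
Proof.
move=> sM; rewrite /qf raddfD /= linearZ /= !mulmxDl !mulmxDr.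
rewrite -!scalemxAl -!scalemxAr.
have addE : forall A B : 'M[R]_1, (A + B) 0 0 = A 0 0 + B 0 0 by move=> A B; rewrite mxE.
have sclE : forall a (A : 'M[R]_1), (a *: A) 0 0 = a * A 0 0 by move=> a A; rewrite mxE.
rewrite !addE !sclE -/(bf M y x) -/(bf M x y) (bf_sym _ _ sM).
ring.
Qed.

Lemma qf_sub_scalar n (M : 'M[R]_n) l x : qf (l%:M - M) x = l * qf 1%:M x - qf M x.
Proof.
rewrite /qf mulmxBr mulmxBl mul_mx_scalar -scalemxAl mulmx1.
have subE : forall A B : 'M[R]_1, (A - B) 0 0 = A 0 0 - B 0 0 by move=> A B; rewrite !mxE.
have sclE : forall a (A : 'M[R]_1), (a *: A) 0 0 = a * A 0 0 by move=> a A; rewrite mxE.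
by rewrite subE sclE.
Qed.

Lemma discriminant_le (a b c : R) : 0 <= c ->
  (forall t, 0 <= a + 2 * t * b + t ^+ 2 * c) -> b ^+ 2 <= a * c.
Proof.
move=> c0 H.
have a0 : 0 <= a by have := H 0; rewrite !(mulr0, mul0r, addr0, expr2).
have [ce|cn0] := eqVneq c 0.
  rewrite ce mulr0.
  have [be|bn0] := eqVneq b 0; first by rewrite be expr2 mul0r.
  have := H (- (a + 1) / (2 * b)).
  have -> : 2 * (- (a + 1) / (2 * b)) * b = - (a + 1) by field.
  rewrite ce mulr0 addr0. lra.
have cp : 0 < c by rewrite lt0r cn0.
have := H (- b / c).
have -> : a + 2 * (- b / c) * b + (- b / c) ^+ 2 * c = a - b ^+ 2 / c by field.
by rewrite subr_ge0 ler_pdivrMr.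
Qed.

Lemma rayleigh_sup n (M : 'M[R]_n) : (0 < n)%N ->
  exists l : R, (forall x, qf M x <= l * qf 1%:M x) /\
    (forall l', (forall x, qf M x <= l' * qf 1%:M x) -> l <= l').
Proof.
move=> n0.
pose E := fun r : R => exists x, 0 < qf 1%:M x /\ r = qf M x / qf 1%:M x.
have bE : bound E.
  exists (mxl1 M) => r [x [hx ->]]; apply/RleP; rewrite ler_pdivrMr //.
  apply: le_trans (qf_bound M x); exact: ler_norm.
have nE : exists r, E r.
  exists (qf M (const_mx 1) / qf 1%:M (const_mx 1 : 'rV[R]_n)), (const_mx 1); split => //.
  rewrite qf1E (eq_bigr (fun=> 1)) => [|i _]; last by rewrite mxE expr1n.
  by rewrite sumr_const card_ord ltr0n.
case: (completeness E bE nE) => l [ub lub]; exists l; split.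
- move=> x; have := qf1_ge0 x; rewrite le0r => /orP [/eqP h|hx].
    by rewrite (qf1_eq0 h) !qf0 mulr0.
  have := ub _ (ex_intro _ x (conj hx erefl)) => /RleP.
  by rewrite ler_pdivrMr // mulrC.
- move=> l' Hl'; apply/RleP; apply: lub => r [x [hx ->]]; apply/RleP.
  by rewrite ler_pdivrMr // mulrC.
Qed.

Lemma psd_unit_coercive n (B : 'M[R]_n) : B^T = B -> B \in unitmx ->
  (forall z, 0 <= qf B z) -> exists C, 0 < C /\ forall x, qf 1%:M x <= C * qf B x.
Proof.
move=> sB uB psdB.
set K1 := mxl1 B; set K2 := mxl1 (invmx B *m (invmx B)^T).
have K10 : 0 <= K1 by exact: mxl1_ge0.
have K20 : 0 <= K2 by exact: mxl1_ge0.
exists (K1 * K2 + 1); split; first by have := mulr_ge0 K10 K20; lra.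
move=> x; set y := x *m invmx B.
have [x0|xpos] := eqVneq (qf 1%:M x) 0.
  by rewrite x0; apply: mulr_ge0 => //; have := mulr_ge0 K10 K20; lra.
have hx : 0 < qf 1%:M x by rewrite lt0r xpos qf1_ge0.
have bf_yx : bf B y x = qf 1%:M x by rewrite /bf /y mulmxKV // /qf mulmx1.
have cs : bf B y x ^+ 2 <= qf B y * qf B x.
  apply: discriminant_le; first exact: psdB.
  by move=> t; rewrite -qf_expand //; exact: psdB.
have hy : qf B y <= K1 * qf 1%:M y.
  by apply: le_trans (qf_bound B y); exact: ler_norm.
have hy2 : qf 1%:M y <= K2 * qf 1%:M x.
  have -> : qf 1%:M y = qf (invmx B *m (invmx B)^T) x by rewrite /qf mulmx1 trmx_mul !mulmxA.
  by apply: le_trans (qf_bound _ x); exact: ler_norm.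
have h1 := ler_wpM2r (psdB x) hy.
have h2 := ler_wpM2r (psdB x) (ler_wpM2l K10 hy2).
have h3 : qf 1%:M x * qf 1%:M x <= qf 1%:M x * (K1 * K2 * qf B x).
  by move: cs h1 h2; rewrite bf_yx expr2; lra.
move: h3; rewrite ler_pM2l // => h3.
have := psdB x; lra.
Qed.

Lemma rayleigh_max_eigen n (M : 'M[R]_n) : (0 < n)%N -> M^T = M ->
  exists (l : R) (v : 'rV[R]_n), v != 0 /\ v *m M = l *: v /\
    (forall x, qf M x <= l * qf 1%:M x).
Proof.
move=> n0 sM; have [l [Hub Hmin]] := rayleigh_sup M n0.
exists l.
have [/eqP/det0P [v vn0 hv] | dn0] := eqVneq (\det (l%:M - M)) 0.
  exists v; do !split => //.
  by move: hv; rewrite mulmxBr mul_mx_scalar => /eqP; rewrite subr_eq0 => /eqP <-.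
exfalso.
have sB : (l%:M - M)^T = l%:M - M by rewrite raddfB /= tr_scalar_mx sM.
have uB : l%:M - M \in unitmx by rewrite unitmxE unitfE.
have psdB : forall z, 0 <= qf (l%:M - M) z by move=> z; rewrite qf_sub_scalar subr_ge0 Hub.
have [C [Cp HC]] := psd_unit_coercive sB uB psdB.
have smaller : forall x, qf M x <= (l - 1 / C) * qf 1%:M x.
  move=> x; have := HC x; rewrite qf_sub_scalar => h.
  have h' : qf 1%:M x / C <= l * qf 1%:M x - qf M x by rewrite ler_pdivrMr // mulrC.
  have -> : (l - 1 / C) * qf 1%:M x = l * qf 1%:M x - qf 1%:M x / C by ring.
  lra.
have := Hmin _ smaller; have : 0 < 1 / C by rewrite divr_gt0.
lra.
Qed.

(* Transport to R^{T_N}: T_N is enumerated by the list PT N, the coordinate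
   vectors ev p form a basis, and a linear operator is represented by the
   matrix of its values on that basis. *)
Definition PT N : seq (nat * nat) := [seq (j, l) | l <- iota 0 N, j <- iota 0 l.+1].

Lemma sumN_big n f : sumN n f = \sum_(i < n) f i.
Proof. elim: n => [|n IH] /=; first by rewrite big_ord0. by rewrite big_ord_recr /= IH. Qed.

Lemma sumT_PT N f : sumT N f = \sum_(p <- PT N) f p.1 p.2.
Proof.
have sumN_iota : forall n g, sumN n g = \sum_(i <- iota 0 n) g i.
  by move=> n g; rewrite sumN_big -(big_mkord xpredT) /index_iota subn0.
rewrite /sumT sumN_iota /PT big_allpairs_dep /=; apply: eq_bigr => l _.
by rewrite sumN_iota Nat.add_1_r.
Qed.

Lemma inT_PT N j l : inT N j l <-> (j, l) \in PT N.
Proof.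
have -> : ((j, l) \in PT N) = (j <= l < N)%N.
  apply/allpairsPdep/idP.
    by move=> [l' [j' [hl hj [-> ->]]]]; move: hl hj; rewrite !mem_iota /= !add0n ltnS => -> ->.
  by move=> /andP [hj hl]; exists l, j; split => //; rewrite mem_iota /= add0n.
rewrite /inT; split; first by move=> [/ssrnat.leP -> /ssrnat.ltP ->].
by move=> /andP [/ssrnat.leP h1 /ssrnat.ltP h2].
Qed.

Lemma uniq_PT N : uniq (PT N).
Proof.
apply: allpairs_uniq_dep; first exact: iota_uniq.
  by move=> l _; exact: iota_uniq.
by move=> [x y] [x' y'] _ _ /= [-> ->].
Qed.

Definition ev (p : nat * nat) : vec := fun a b => if (a == p.1) && (b == p.2) then 1 else 0.

Lemma evE p q : ev p q.1 q.2 = if q == p then 1 else 0.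
Proof. by case: p q => [a b] [c d]; rewrite /ev /= xpair_eqE. Qed.

Lemma sum_PT_delta N p (g : nat * nat -> R) : p \in PT N ->
  \sum_(q <- PT N) (if q == p then g q else 0) = g p.
Proof.
move=> ps; rewrite (bigD1_seq p) //= ?uniq_PT // eqxx big1_seq ?addr0 //.
by move=> q /andP [/negbTE -> _].
Qed.

Lemma ip_ev_l N p v : p \in PT N -> ipT N (ev p) v = v p.1 p.2.
Proof.
move=> hp; rewrite /ipT sumT_PT -[RHS](sum_PT_delta (fun q => v q.1 q.2) hp).
by apply: eq_bigr => q _; rewrite RmultE evE; case: (q == p); rewrite ?mul1r ?mul0r.
Qed.

Lemma ip_ev_r N p v : p \in PT N -> ipT N v (ev p) = v p.1 p.2.
Proof. by move=> hp; rewrite ip_sym ip_ev_l. Qed.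

Lemma lin_expand N M x a b : linT N M -> inT N a b ->
  M x a b = \sum_(q <- PT N) x q.1 q.2 * M (ev q) a b.
Proof.
move=> hM hab; have [hA [hZ hE]] := hM.
have lin_sum : forall (s : seq (nat * nat)) j l, inT N j l ->
    M (fun a b => \sum_(q <- s) x q.1 q.2 * ev q a b) j l
    = \sum_(q <- s) x q.1 q.2 * M (ev q) j l.
  elim => [|p s IH] j l hjl.
    rewrite big_nil; apply: etrans (lin_zero N M j l hM hjl); apply: hE => // c d _.
    by rewrite big_nil.
  rewrite big_cons -IH // -RmultE -hZ // -RplusE -hA //.
  by apply: hE => // c d _; rewrite big_cons.
rewrite -lin_sum //; apply: hE => // c d hcd.
have hp : (c, d) \in PT N by apply/inT_PT.
rewrite -[LHS](sum_PT_delta (fun q => x q.1 q.2) hp).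
apply: eq_bigr => -[e f] _; rewrite /ev /= xpair_eqE (eq_sym c) (eq_sym d).
by case: ((e == c) && (f == d)); rewrite ?mulr1 ?mulr0.
Qed.

Definition idx N (k : nat) : nat * nat := nth (0%N, 0%N) (PT N) k.
Definition coords N (x : vec) : 'rV[R]_(size (PT N)) := \row_k x (idx N k).1 (idx N k).2.
Definition op_mx N (M : vec -> vec) : 'M[R]_(size (PT N)) :=
  \matrix_(k, k') M (ev (idx N k')) (idx N k).1 (idx N k).2.

Lemma idx_PT N (k : 'I_(size (PT N))) : idx N k \in PT N.
Proof. exact: mem_nth. Qed.

Lemma idx_inT N (k : 'I_(size (PT N))) : inT N (idx N k).1 (idx N k).2.
Proof. by apply/inT_PT; case: (idx N k) (idx_PT k). Qed.

Lemma sum_idx N (F : nat * nat -> R) : \sum_(q <- PT N) F q = \sum_(k < size (PT N)) F (idx N k).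
Proof. by rewrite (big_nth (0%N, 0%N)) big_mkord. Qed.

Lemma op_mx_sym N M : symT N M -> (op_mx N M)^T = op_mx N M.
Proof.
move=> hS; apply/matrixP => k k'; rewrite !mxE.
by have := hS (ev (idx N k')) (ev (idx N k)); rewrite ip_ev_l ?idx_PT // ip_ev_r ?idx_PT.
Qed.

Lemma ip_op_mx N M x : linT N M -> ipT N x (M x) = qf (op_mx N M) (coords N x).
Proof.
move=> hM; rewrite qfE /ipT sumT_PT sum_idx.
apply: eq_bigr => k _; rewrite RmultE (lin_expand x hM (idx_inT k)) sum_idx.
rewrite big_distrr /=; apply: eq_bigr => k' _; rewrite !mxE; ring.
Qed.

Lemma ip_coords N x : ipT N x x = qf 1%:M (coords N x).
Proof.
rewrite qf1E /ipT sumT_PT sum_idx.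
by apply: eq_bigr => k _; rewrite RmultE mxE expr2.
Qed.

Lemma rayleigh_eigvec N M : (0 < N)%coq_nat -> linT N M -> symT N M ->
  exists lam y, nonzeroT N y /\ eigvec N M lam y /\ rayleigh_bound N M lam.
Proof.
move=> N0 hM hS.
have n0 : (0 < size (PT N))%N.
  have h : (0%N, 0%N) \in PT N by apply/inT_PT; rewrite /inT; lia.
  by rewrite -(index_mem (0%N, 0%N)) in h; apply: leq_ltn_trans h.
have [lam [v [vn0 [hv Hub]]]] := rayleigh_max_eigen n0 (op_mx_sym hS).
pose y : vec := fun a b => \sum_(k < size (PT N)) v 0 k * ev (idx N k) a b.
have y_idx : forall k0 : 'I_(size (PT N)), y (idx N k0).1 (idx N k0).2 = v 0 k0.
  move=> k0; rewrite /y (bigD1 k0) //= big1 => [|k hk].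
    by rewrite evE eqxx mulr1 addr0.
  by rewrite evE nth_uniq ?uniq_PT // (inj_eq val_inj) eq_sym (negbTE hk) mulr0.
exists lam, y; split; [|split].
- have [k hk] : exists k, v 0 k != 0.
    apply/existsP; apply: contraR vn0 => /existsPn h.
    by apply/eqP/rowP => k; rewrite mxE; apply/eqP; move/negPn: (h k).
  by exists (idx N k).1, (idx N k).2; split; [exact: idx_inT | rewrite y_idx; apply/eqP].
- move=> a b hab.
  have hp : (a, b) \in PT N by apply/inT_PT.
  pose k0 := Ordinal (etrans (index_mem (a, b) (PT N)) hp).
  have hk0 : idx N k0 = (a, b) by rewrite /idx /= nth_index.
  have ya : y a b = v 0 k0 by rewrite -y_idx hk0.
  rewrite (lin_expand y hM hab) sum_idx RmultE ya.
  have := congr1 (fun A : 'M[R]_(1, size (PT N)) => A 0 k0) hv; rewrite !mxE => <-.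
  apply: eq_bigr => k _; rewrite y_idx.
  have := congr1 (fun A : 'M[R]_(size (PT N)) => A k0 k) (op_mx_sym hS); rewrite !mxE => ->.
  by rewrite hk0.
- by move=> x; rewrite ip_op_mx // ip_coords; apply/RleP; exact: Hub.
Qed.
End Rayleigh.
Import Rayleigh.

Lemma slope_zero b c : 0 <= c -> (forall t, 0 <= 2 * t * b + t * t * c) -> b = 0.
Proof.
intros Hc H. set (e := / (c + 1)).
assert (He : 0 < e) by (unfold e; apply Rinv_0_lt_compat; lra).
assert (Hec : e * c < 1).
{ unfold e. apply Rmult_lt_reg_r with (c + 1); [lra|].
  rewrite Rmult_assoc, (Rmult_comm c), <- Rmult_assoc, Rinv_l by lra. lra. }
specialize (H (- b * e)).
assert (E : 2 * (- b * e) * b + (- b * e) * (- b * e) * c = e * (b * b) * (e * c - 2)) by ring.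
rewrite E in H. assert (0 <= b * b) by nra.
assert (e * (b * b) <= 0) by nra. assert (b * b <= 0) by nra. nra.
Qed.

Lemma Rabs_eq0 x : Rabs x = 0 -> x = 0.
Proof. intros H. destruct (Req_dec x 0) as [e|e]; auto. apply Rabs_no_R0 in e; contradiction. Qed.

Definition cooperative N (M : vec -> vec) : Prop :=
  forall x j l, (forall a b, inT N a b -> 0 <= x a b) -> inT N j l -> x j l = 0 -> 0 <= M x j l.

Definition irreducible_op N (M : vec -> vec) : Prop :=
  forall w lam, (forall a b, inT N a b -> 0 <= w a b) -> eigvec N M lam w ->
  forall j l, inT N j l -> w j l = 0 -> forall a b, inT N a b -> w a b = 0.

Section PerronFrobenius.
Variables (N : nat) (M : vec -> vec).
Hypothesis hM : linT N M.
Hypothesis hS : symT N M.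
Notation ip := (ipT N).

(* A vector z attaining the Rayleigh bound is an eigenvector: with
   u = lam z - M z, the bound at z + t u reads 0 <= 2 t |u|^2 + O(t^2). *)
Lemma rayleigh_attained_eigvec lam z : rayleigh_bound N M lam ->
  ip z (M z) = lam * ip z z -> eigvec N M lam z.
Proof.
intros Hub Hz.
set (u := fun a b => lam * z a b + (-1) * M z a b).
assert (Hu : ip u u = lam * ip z u - ip (M z) u) by (unfold u at 1; rewrite ip_lin_l; ring).
assert (Hs : ip z (M u) = ip (M z) u) by apply hS.
assert (HQ : forall t, 0 <= 2 * t * ip u u + t * t * (lam * ip u u - ip u (M u))).
{ intros t. set (x := fun a b => 1 * z a b + t * u a b).
  pose proof (Hub x) as Hx.
  assert (E1 : ip x (M x) = ip x (fun a b => 1 * M z a b + t * M u a b)).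
  { apply ip_ext; [intros ? ? ?; auto|]. intros j l H. unfold x. apply (lin_comb N); auto. }
  rewrite E1, ip_lin_r in Hx. unfold x in Hx. rewrite !ip_lin_l, !ip_lin_r in Hx.
  rewrite (ip_sym N u z), (ip_sym N u (M z)), Hs, Hz in Hx. nra. }
assert (Hc : 0 <= lam * ip u u - ip u (M u)) by (pose proof (Hub u); lra).
pose proof (slope_zero _ _ Hc HQ) as H0.
intros j l H. pose proof (nrm_eq0 N u H0 j l H) as Hj. unfold u in Hj. lra.
Qed.

Hypothesis hC : cooperative N M.

Lemma rayleigh_abs_ge z :
  ip z (M z) <= ip (fun a b => Rabs (z a b)) (M (fun a b => Rabs (z a b))).
Proof.
set (p := fun a b => Rmax (z a b) 0). set (m := fun a b => Rmax (- z a b) 0).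
assert (Ez : eqT N z (fun a b => 1 * p a b + (-1) * m a b)).
{ intros a b _; unfold p, m, Rmax; destruct Rle_dec; destruct Rle_dec; lra. }
assert (Ea : eqT N (fun a b => Rabs (z a b)) (fun a b => 1 * p a b + 1 * m a b)).
{ intros a b _; unfold p, m, Rmax; destruct Rle_dec; destruct Rle_dec;
  [rewrite Rabs_left1 | rewrite Rabs_left1 | rewrite Rabs_right | rewrite Rabs_right]; lra. }
assert (Hp : forall a b, inT N a b -> 0 <= p a b) by (intros; unfold p, Rmax; destruct Rle_dec; lra).
assert (Hm : forall a b, inT N a b -> 0 <= m a b) by (intros; unfold m, Rmax; destruct Rle_dec; lra).
(* the cross term <p, M m> is nonnegative since p and m have disjoint supports *)
assert (Hpm : 0 <= ip p (M m)).
{ unfold ipT; apply sumT_ge0; intros a b H.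
  destruct (Rle_dec 0 (z a b)) as [h|h].
  - apply Rmult_le_pos; [apply Hp; auto|]. apply hC; auto.
    unfold m, Rmax; destruct Rle_dec; lra.
  - replace (p a b) with 0 by (unfold p, Rmax; destruct Rle_dec; lra). lra. }
rewrite (ip_ext N z (fun a b => 1 * p a b + (-1) * m a b) (M z)
  (fun a b => 1 * M p a b + (-1) * M m a b)); [| exact Ez |].
2:{ intros a b H. rewrite (lin_ext N M _ _ a b hM Ez H). apply (lin_comb N); auto. }
rewrite (ip_ext N (fun a b => Rabs (z a b)) (fun a b => 1 * p a b + 1 * m a b)
  (M (fun a b => Rabs (z a b))) (fun a b => 1 * M p a b + 1 * M m a b)); [| exact Ea |].
2:{ intros a b H. rewrite (lin_ext N M _ _ a b hM Ea H). apply (lin_comb N); auto. }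
rewrite !ip_lin_l, !ip_lin_r.
assert (E : ip m (M p) = ip p (M m)) by (rewrite hS; apply ip_sym).
rewrite E. lra.
Qed.

Lemma abs_eigvec lam z : rayleigh_bound N M lam -> eigvec N M lam z ->
  eigvec N M lam (fun a b => Rabs (z a b)).
Proof.
intros Hub Hz. apply rayleigh_attained_eigvec; auto.
pose proof (rayleigh_abs_ge z). pose proof (Hub (fun a b => Rabs (z a b))).
rewrite nrm_abs in *. rewrite (ip_eigvec N M lam z Hz) in H. lra.
Qed.

Hypothesis hI : irreducible_op N M.

Lemma top_eigvec_nonvanishing lam y : rayleigh_bound N M lam -> eigvec N M lam y ->
  nonzeroT N y -> forall a b, inT N a b -> 0 < Rabs (y a b).
Proof.
intros Hub Hy [j0 [l0 [H0 Hy0]]] a b Hab.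
destruct (Rle_lt_or_eq_dec 0 (Rabs (y a b)) (Rabs_pos _)) as [h|e]; auto.
exfalso. apply Hy0, Rabs_eq0.
refine (hI _ lam _ (abs_eigvec lam y Hub Hy) a b Hab (eq_sym e) j0 l0 H0).
intros; apply Rabs_pos.
Qed.

Lemma top_eigvec_simple lam W : (0 < N)%nat -> rayleigh_bound N M lam -> eigvec N M lam W ->
  (forall a b, inT N a b -> 0 < W a b) ->
  forall v, eigvec N M lam v -> exists c, eqT N v (fun j l => c * W j l).
Proof.
intros N0 Hub HW HWp v Hv.
assert (H00 : inT N 0 0) by (unfold inT; lia).
pose proof (HWp 0%nat 0%nat H00) as HW00.
set (c := v 0%nat 0%nat / W 0%nat 0%nat). exists c.
set (z := fun a b => 1 * v a b + (- c) * W a b).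
assert (Hz : eigvec N M lam z).
{ intros j l H. unfold z. rewrite (lin_comb N) by auto. rewrite Hv, HW by auto. ring. }
assert (Hz0 : z 0%nat 0%nat = 0) by (unfold z, c; field; lra).
assert (Hzz : forall a b, inT N a b -> Rabs (z a b) = 0).
{ refine (hI _ lam _ (abs_eigvec lam z Hub Hz) 0%nat 0%nat H00 _).
  - intros; apply Rabs_pos.
  - simpl. rewrite Hz0, Rabs_R0. auto. }
intros j l H. specialize (Hzz j l H). apply Rabs_eq0 in Hzz. unfold z in Hzz. lra.
Qed.

Lemma perron_frobenius : (0 < N)%nat ->
  exists lam W, (forall a b, inT N a b -> 0 < W a b) /\ ip W W = 1 /\
    eigvec N M lam W /\ rayleigh_bound N M lam /\
    (forall v, eigvec N M lam v -> exists c, eqT N v (fun j l => c * W j l)).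
Proof.
intros N0.
destruct (rayleigh_eigvec N0 hM hS) as [lam [y [Hy0 [Hy Hub]]]].
set (w := fun a b => Rabs (y a b)).
assert (Hwp : forall a b, inT N a b -> 0 < w a b) by (apply top_eigvec_nonvanishing with lam; auto).
assert (Hnw : 0 < ip w w).
{ apply nrm_pos. exists 0%nat, 0%nat. assert (H00 : inT N 0 0) by (unfold inT; lia).
  specialize (Hwp 0%nat 0%nat H00). split; [auto | lra]. }
set (s := / sqrt (ip w w)).
assert (Hs : s * s * ip w w = 1).
{ unfold s. rewrite <- Rinv_mult, sqrt_sqrt by lra. field. lra. }
assert (Hs0 : 0 < s) by (unfold s; apply Rinv_0_lt_compat, sqrt_lt_R0; lra).
set (W := fun a b => s * w a b).
assert (HW : eigvec N M lam W).
{ intros j l H. unfold W, w. destruct hM as [_ [hZ _]]. rewrite hZ by auto.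
  rewrite (abs_eigvec lam y Hub Hy) by auto. ring. }
assert (HWp : forall a b, inT N a b -> 0 < W a b)
  by (intros; unfold W; apply Rmult_lt_0_compat; auto).
exists lam, W. repeat split; auto.
- unfold W. rewrite ip_scal_l, ip_scal_r. lra.
- apply top_eigvec_simple; auto.
Qed.

End PerronFrobenius.

(* Every complex eigenvalue a + ib of M has real part at most the Rayleigh
   bound: take the real part of <u - iv, M (u + iv)>. *)
Lemma complex_eigenvalue_le N M lam a b : rayleigh_bound N M lam ->
  is_eigenvalue N M a b -> a <= lam.
Proof.
intros Hub [u [v [[j [l [Hjl Hnz]]] [Hu Hv]]]].
assert (E1 : ipT N u (M u) = a * ipT N u u + (- b) * ipT N u v).
{ rewrite (ip_ext N u u (M u) (fun j l => a * u j l + (- b) * v j l))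
    by (intros ? ? ?; try rewrite Hu by auto; try ring).
  apply ip_lin_r. }
assert (E2 : ipT N v (M v) = b * ipT N v u + a * ipT N v v).
{ rewrite (ip_ext N v v (M v) (fun j l => b * u j l + a * v j l))
    by (intros ? ? ?; try rewrite Hv by auto; try ring).
  apply ip_lin_r. }
pose proof (Hub u). pose proof (Hub v). rewrite (ip_sym N v u) in E2.
pose proof (nrm_ge0 N u). pose proof (nrm_ge0 N v).
assert (Hp : 0 < ipT N u u + ipT N v v).
{ destruct Hnz as [h|h].
  - assert (0 < ipT N u u) by (apply nrm_pos; exists j, l; auto). lra.
  - assert (0 < ipT N v v) by (apply nrm_pos; exists j, l; auto). lra. }
apply Rmult_le_reg_r with (ipT N u u + ipT N v v); auto. nra.
Qed.

Section SymmetricSpectrum.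
Variables (N : nat) (M : vec -> vec).
Hypothesis hM : linT N M.
Hypothesis hS : symT N M.
Notation ip := (ipT N).

(* Apply the Rayleigh principle to the deflated operator
   x |-> M x - <W, x> W. *)
Lemma spectral_gap lam W : (0 < N)%nat -> ip W W = 1 -> eigvec N M lam W ->
  rayleigh_bound N M lam ->
  (forall v, eigvec N M lam v -> exists c, eqT N v (fun j l => c * W j l)) ->
  exists lam2, lam2 < lam /\ forall r, ip W r = 0 -> ip r (M r) <= lam2 * ip r r.
Proof.
intros N0 HW1 HW Hub Hsimp.
set (Md := fun (x : vec) a b => M x a b + (- ip W x) * W a b).
assert (hMd : linT N Md).
{ destruct hM as [hA [hZ hE]]. split; [|split].
  - intros u v j l H. unfold Md. rewrite hA, ip_add_r by auto. ring.
  - intros c u j l H. unfold Md. rewrite hZ, ip_scal_r by auto. ring.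
  - intros u v Huv j l H. unfold Md. rewrite (hE u v Huv j l H).
    rewrite (ip_ext N W W u v) by (auto; intros ? ? ?; auto). auto. }
assert (Hq : forall x, ip x (Md x) = ip x (M x) - ip W x * ip W x).
{ intros x. unfold Md. rewrite ip_add_r, ip_scal_r, (ip_sym N x W). ring. }
assert (hSd : symT N Md).
{ intros u v. unfold Md.
  rewrite (ip_sym N (fun a b => M u a b + - ip W u * W a b) v), !ip_add_r, !ip_scal_r.
  rewrite (ip_sym N v (M u)), (hS u v), (ip_sym N (M u) v), (ip_sym N v W), (ip_sym N u W).
  ring. }
destruct (rayleigh_eigvec N0 hMd hSd) as [lam2 [y [[j0 [l0 [H0 Hy0]]] [Hy Hub2]]]].
exists lam2. split.
- (* if lam2 >= lam, the eigenvector y of Md would be a top eigenvector of M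
     orthogonal to W, contradicting simplicity *)
  assert (Hn : 0 < ip y y) by (apply nrm_pos; exists j0, l0; auto).
  assert (Hey : ip y (Md y) = lam2 * ip y y) by (apply ip_eigvec; exact Hy).
  rewrite Hq in Hey. pose proof (Hub y).
  assert (0 <= ip W y * ip W y) by nra.
  destruct (Rlt_le_dec lam2 lam) as [h|h]; auto. exfalso.
  assert (HW0 : ip W y * ip W y = 0) by nra.
  assert (Heq : ip y (M y) = lam * ip y y) by nra.
  destruct (Hsimp y (rayleigh_attained_eigvec N M hM hS lam y Hub Heq)) as [c Hc].
  assert (ip W y = c).
  { rewrite (ip_ext N W W y (fun j l => c * W j l)) by (auto; intros ? ? ?; auto).
    rewrite ip_scal_r, HW1. ring. }
  assert (Hc0 : c = 0) by nra. apply Hy0. rewrite Hc by auto. rewrite Hc0. ring.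
- intros r Hr. rewrite <- (Rminus_0_r (ip r (M r))).
  replace 0 with (ip W r * ip W r) by (rewrite Hr; ring). rewrite <- Hq. apply Hub2.
Qed.

(* For a symmetric operator, generalized eigenvectors are eigenvectors:
   (M - lam)^(k+1) v = 0 forces (M - lam) v = 0, since
   |(M - lam) y|^2 = <y, (M - lam)^2 y>. *)
Lemma generalized_eigvec lam k v : (1 <= k)%nat ->
  eqT N (opow k (fun x j l => M x j l - lam * x j l) v) (fun _ _ => 0) ->
  eigvec N M lam v.
Proof.
set (B := fun (x : vec) j l => M x j l - lam * x j l).
assert (symB : forall u w, ip u (B w) = ip (B u) w).
{ intros u w.
  rewrite (ip_ext N u u (B w) (fun j l => 1 * M w j l + (- lam) * w j l)) by (intros ? ? ?; unfold B; ring).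
  rewrite (ip_ext N (B u) (fun j l => 1 * M u j l + (- lam) * u j l) w w) by (intros ? ? ?; unfold B; ring).
  rewrite ip_lin_r, ip_lin_l, hS, (ip_sym N u w). ring. }
(* if B^(m+2) w = 0 then |B^(m+1) w|^2 = <B^m w, B^(m+2) w> = 0 *)
assert (descend : forall m w, eqT N (opow (S m) B w) (fun _ _ => 0) -> eqT N (B w) (fun _ _ => 0)).
{ induction m as [|m IH]; intros w H; simpl in H; auto.
  apply IH. simpl. set (y := opow m B w) in *.
  apply nrm_eq0. rewrite <- symB.
  rewrite (ip_ext N y y (B (B y)) (fun _ _ => 0)) by (auto; intros ? ? ?; auto).
  unfold ipT. transitivity (sumT N (fun _ _ => 0)); [apply sumT_ext; intros; ring | apply sumT_0]. }
intros Hk H. destruct k as [|k]; [lia|].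
intros j l Hjl. pose proof (descend k v H j l Hjl) as HB. unfold B in HB. lra.
Qed.

End SymmetricSpectrum.

Lemma dlim_ext f g x l l' : (forall t, f t = g t) -> l = l' ->
  derivable_pt_lim f x l -> derivable_pt_lim g x l'.
Proof.
intros H <- D eps Heps. destruct (D eps Heps) as [d Hd]. exists d.
intros h Hh Hd'. rewrite <- !H. apply Hd; auto.
Qed.

Lemma dlim_exp_lin k x : derivable_pt_lim (fun t => exp (k * t)) x (k * exp (k * x)).
Proof.
assert (H1 : derivable_pt_lim (fun t => k * t) x k).
{ apply (dlim_ext (fun t => k * id t) _ _ (k * 1)); [intros; auto | ring |].
  apply derivable_pt_lim_scal, derivable_pt_lim_id. }
apply (dlim_ext _ _ _ _ _ (fun t => eq_refl) (Rmult_comm _ _)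
  (derivable_pt_lim_comp (fun t => k * t) exp x k (exp (k * x)) H1 (derivable_pt_lim_exp _))).
Qed.

Lemma dlim_sumN n F D z : (forall i, (i < n)%nat -> derivable_pt_lim (F i) z (D i)) ->
  derivable_pt_lim (fun t => sumN n (fun i => F i t)) z (sumN n D).
Proof.
induction n as [|n IH]; intros H; simpl.
- apply derivable_pt_lim_const.
- apply (derivable_pt_lim_plus (fun t => sumN n (fun i => F i t)) (F n));
    [apply IH; intros; apply H | apply H]; lia.
Qed.

Lemma dlim_sumT N F D z :
  (forall j l, inT N j l -> derivable_pt_lim (fun t => F t j l) z (D j l)) ->
  derivable_pt_lim (fun t => sumT N (F t)) z (sumT N D).
Proof.
intros H; unfold sumT.
apply (dlim_sumN N (fun l t => sumN (l + 1) (fun j => F t j l))). intros l Hl.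
apply (dlim_sumN (l + 1) (fun j t => F t j l)). intros j Hj. apply H. unfold inT; lia.
Qed.

Lemma dlim_exp_damped f d k z : derivable_pt_lim f z d ->
  derivable_pt_lim (fun t => f t * exp (- k * t)) z ((d - k * f z) * exp (- k * z)).
Proof.
intros Hf.
apply (dlim_ext (fun t => f t * exp (- k * t)) _ _ (d * exp (- k * z) + f z * (- k * exp (- k * z))));
  [intros; auto | ring |].
apply (derivable_pt_lim_mult f (fun t => exp (- k * t))); [exact Hf | apply dlim_exp_lin].
Qed.

Lemma linear_ode_solution f k : (forall z, derivable_pt_lim f z (k * f z)) ->
  forall z, f z = f 0 * exp (k * z).
Proof.
intros Hf z.
set (h := fun t => f t * exp (- k * t)).
assert (Hh : forall t, derivable_pt_lim h t 0).
{ intros t. apply (dlim_ext h h _ ((k * f t - k * f t) * exp (- k * t))); [auto | ring |].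
  apply dlim_exp_damped, Hf. }
set (pr := fun t => exist (fun l => derivable_pt_abs h t l) 0 (Hh t) : derivable_pt h t).
assert (Hc := null_derivative_1 h pr (fun t => derive_pt_eq_0 h t 0 (pr t) (Hh t)) z 0).
unfold h in Hc. replace (- k * 0) with 0 in Hc by ring. rewrite exp_0, Rmult_1_r in Hc.
rewrite <- Hc, Rmult_assoc, <- exp_plus. replace (- k * z + k * z) with 0 by ring.
rewrite exp_0. ring.
Qed.

Lemma linear_ode_bound f d k : (forall z, derivable_pt_lim f z (d z)) ->
  (forall z, d z <= k * f z) -> forall z, 0 <= z -> f z <= f 0 * exp (k * z).
Proof.
intros Hf Hd z Hz.
set (h := fun t => f t * exp (- k * t)).
assert (Hh : forall t, derivable_pt_lim h t ((d t - k * f t) * exp (- k * t)))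
  by (intros; apply dlim_exp_damped, Hf).
set (pr := fun t => exist (fun l => derivable_pt_abs h t l) _ (Hh t) : derivable_pt h t).
assert (Hdec : decreasing h).
{ apply (nonpos_derivative_1 h pr). intros t.
  rewrite (derive_pt_eq_0 h t _ (pr t) (Hh t)).
  pose proof (Hd t). pose proof (exp_pos (- k * t)). nra. }
pose proof (Hdec 0 z Hz) as H. unfold h in H.
replace (- k * 0) with 0 in H by ring. rewrite exp_0, Rmult_1_r in H.
replace (f z) with (f z * exp (- k * z) * exp (k * z)).
2:{ rewrite Rmult_assoc, <- exp_plus. replace (- k * z + k * z) with 0 by ring. rewrite exp_0; ring. }
apply Rmult_le_compat_r; [left; apply exp_pos | auto].
Qed.

Lemma exp_decay_eventually (K e d : R) : 0 <= K -> 0 < e -> 0 < d ->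
  exists Z, forall z, Z <= z -> K * exp (- d * z) < e.
Proof.
intros HK He Hd.
exists ((Rabs (ln (K + 1)) + Rabs (ln e) + 1) / d). intros z Hz.
assert (Hdz : Rabs (ln (K + 1)) + Rabs (ln e) + 1 <= d * z).
{ apply Rmult_le_compat_l with (r := d) in Hz; [|lra].
  replace (d * ((Rabs (ln (K + 1)) + Rabs (ln e) + 1) / d))
    with (Rabs (ln (K + 1)) + Rabs (ln e) + 1) in Hz by (field; lra). auto. }
assert (H1 : (K + 1) * exp (- d * z) < e).
{ rewrite <- (exp_ln (K + 1)), <- exp_plus, <- (exp_ln e) by lra.
  apply exp_increasing. pose proof (Rle_abs (ln (K + 1))). pose proof (Rle_abs (- ln e)).
  rewrite Rabs_Ropp in *. lra. }
pose proof (exp_pos (- d * z)). nra.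
Qed.

Lemma relative_error_vanishes (f : R -> R) K a lam d : 0 < a -> 0 <= K -> 0 < d ->
  (forall z, 0 <= z -> f z * f z <= K * exp (2 * (lam - d) * z)) ->
  forall e, 0 < e -> exists Z, forall z, Z <= z -> Rabs (f z / (a * exp (lam * z))) < e.
Proof.
intros Ha HK Hd Hf e He.
destruct (exp_decay_eventually (K / (a * a)) (e * e) (2 * d)) as [Z HZ];
  [apply Rmult_le_pos; [auto | left; apply Rinv_0_lt_compat; nra] | nra | lra |].
exists (Rmax Z 0). intros z Hz.
pose proof (HZ z (Rle_trans _ _ _ (Rmax_l Z 0) Hz)) as Hsmall.
pose proof (Hf z (Rle_trans _ _ _ (Rmax_r Z 0) Hz)) as Hfz.
set (E := exp (lam * z)). assert (HE : 0 < E) by apply exp_pos.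
set (q := f z / (a * E)).
assert (Hq : f z = q * (a * E)) by (unfold q; field; nra).
assert (Hexp : exp (2 * (lam - d) * z) = exp (- (2 * d) * z) * (E * E)).
{ unfold E. rewrite <- !exp_plus. f_equal. ring. }
assert (Hq2 : q * q * (a * a) <= K * exp (- (2 * d) * z)).
{ apply Rmult_le_reg_r with (E * E); [nra|].
  rewrite Hq, Hexp in Hfz. nra. }
assert (Hqe : q * q < e * e).
{ apply Rle_lt_trans with (K / (a * a) * exp (- (2 * d) * z)); auto.
  apply Rmult_le_reg_r with (a * a); [nra|].
  replace (K / (a * a) * exp (- (2 * d) * z) * (a * a)) with (K * exp (- (2 * d) * z))
    by (field; lra). lra. }
assert (Habs : Rabs q * Rabs q = q * q) by (rewrite <- Rabs_mult; apply Rabs_right; nra).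
pose proof (Rabs_pos q). fold E. fold q. nra.
Qed.

(* The
   component <W, S(z)> is exactly <W, S(0)> e^{lam z}; the remainder
   orthogonal to W has squared norm at most its initial value times
   e^{2 lam2 z}. *)
Section Asymptotics.
Variables (N : nat) (M : vec -> vec) (lam lam2 : R) (W : vec).
Hypothesis hM : linT N M.
Hypothesis hS : symT N M.
Hypothesis HW1 : ipT N W W = 1.
Hypothesis HW : eigvec N M lam W.
Hypothesis Hgap : forall r, ipT N W r = 0 -> ipT N r (M r) <= lam2 * ipT N r r.
Variable S : R -> vec.
Hypothesis HS : forall z j l, inT N j l -> derivable_pt_lim (fun t => S t j l) z (M (S z) j l).

Definition top_part (t : R) : R := ipT N W (S t).
Definition remainder (t : R) : vec := fun j l => S t j l + (- top_part t) * W j l.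

(* <W, S>' = <W, M S> = <M W, S> = lam <W, S>. *)
Lemma top_part_exp z : top_part z = top_part 0 * exp (lam * z).
Proof.
apply linear_ode_solution. intros t. unfold top_part, ipT.
apply (dlim_ext (fun t => sumT N (fun j l => W j l * S t j l)) _ _
  (sumT N (fun j l => W j l * M (S t) j l))); [auto | |].
- change (ipT N W (M (S t)) = lam * ipT N W (S t)).
  rewrite hS, (ip_ext N (M W) (fun j l => lam * W j l) (S t) (S t)) by (auto; intros ? ? ?; auto).
  apply ip_scal_l.
- apply (dlim_sumT N (fun t j l => W j l * S t j l)). intros j l H.
  apply derivable_pt_lim_scal, HS; auto.
Qed.

Lemma remainder_orth t : ipT N W (remainder t) = 0.
Proof. unfold remainder. rewrite ip_add_r, ip_scal_r, HW1. unfold top_part. ring. Qed.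

Lemma remainder_deriv z j l : inT N j l ->
  derivable_pt_lim (fun t => remainder t j l) z (M (remainder z) j l).
Proof.
intros H.
replace (M (remainder z) j l) with (M (S z) j l + W j l * (-1 * (lam * top_part z))).
2:{ rewrite (lin_ext N M (remainder z) (fun a b => 1 * S z a b + (- top_part z) * W a b) j l hM)
      by (auto; intros ? ? ?; unfold remainder; ring).
    rewrite (lin_comb N) by auto. rewrite HW by auto. ring. }
apply (derivable_pt_lim_plus (fun t => S t j l) (fun t => - top_part t * W j l) z); [apply HS; auto|].
apply (dlim_ext (fun t => W j l * (-1 * (top_part 0 * exp (lam * t)))) _ _
  (W j l * (-1 * (top_part 0 * (lam * exp (lam * z))))));
  [intros; rewrite (top_part_exp t); ring | rewrite (top_part_exp z); ring |].
do 3 apply derivable_pt_lim_scal. apply dlim_exp_lin.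
Qed.

(* |r|^2' = 2 <r, M r> <= 2 lam2 |r|^2 by the spectral gap; conclude by Gronwall. *)
Lemma remainder_decay z : 0 <= z ->
  ipT N (remainder z) (remainder z) <= ipT N (remainder 0) (remainder 0) * exp (2 * lam2 * z).
Proof.
apply (linear_ode_bound (fun t => ipT N (remainder t) (remainder t))
  (fun t => 2 * ipT N (remainder t) (M (remainder t)))).
- intros t. unfold ipT at 1.
  apply (dlim_ext (fun t => sumT N (fun j l => remainder t j l * remainder t j l)) _ _
    (sumT N (fun j l => M (remainder t) j l * remainder t j l
                        + remainder t j l * M (remainder t) j l))); [auto | |].
  + unfold ipT. set (rMr := sumT N (fun j l => remainder t j l * M (remainder t) j l)).
    replace (2 * rMr) with (1 * rMr + 1 * rMr) by ring. unfold rMr.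
    rewrite <- sumT_lin. apply sumT_ext; intros; ring.
  + apply (dlim_sumT N (fun t j l => remainder t j l * remainder t j l)). intros j l H.
    apply derivable_pt_lim_mult; apply remainder_deriv; auto.
- intros t. pose proof (Hgap (remainder t) (remainder_orth t)). lra.
Qed.

Hypothesis Hlt : lam2 < lam.
Hypothesis HWp : forall a b, inT N a b -> 0 < W a b.

Lemma solution_asymptotics :
  (forall j l, inT N j l -> 0 <= S 0 j l) -> nonzeroT N (S 0) ->
  0 < sumT N (fun j l => W j l * S 0 j l) /\
  exists eps : R -> vec,
    (forall j l, inT N j l -> forall e, 0 < e -> exists Z, forall z, Z <= z -> Rabs (eps z j l) < e) /\
    (forall z j l, inT N j l ->
       S z j l = sumT N (fun j' l' => W j' l' * S 0 j' l') * W j l * exp (lam * z) * (1 + eps z j l)).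
Proof.
intros HS0 [j0 [l0 [H0 Hn0]]].
set (c := sumT N (fun j l => W j l * S 0 j l)).
assert (Hc : 0 < c).
{ unfold c; apply sumT_pos.
  - intros a b H; apply Rmult_le_pos; [left | ]; auto.
  - exists j0, l0; split; auto. apply Rmult_lt_0_compat; auto. specialize (HS0 j0 l0 H0). lra. }
assert (Htop : forall z, top_part z = c * exp (lam * z)) by (intros; apply top_part_exp).
split; auto.
exists (fun z j l => remainder z j l / (c * W j l * exp (lam * z))). split.
- intros j l H.
  apply (relative_error_vanishes (fun z => remainder z j l)
    (ipT N (remainder 0) (remainder 0)) (c * W j l) lam (lam - lam2));
    [apply Rmult_lt_0_compat; auto | apply nrm_ge0 | lra |].
  intros z Hz. replace (2 * (lam - (lam - lam2)) * z) with (2 * lam2 * z) by ring.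
  apply Rle_trans with (ipT N (remainder z) (remainder z)); [|apply remainder_decay; auto].
  apply (sumT_term N (fun a b => remainder z a b * remainder z a b)); auto. intros; nra.
- intros z j l H. pose proof (HWp j l H). pose proof (exp_pos (lam * z)).
  replace (S z j l) with (remainder z j l + top_part z * W j l) by (unfold remainder; ring).
  rewrite Htop. fold c. field. split; [|split]; lra.
Qed.
End Asymptotics.

Lemma Sget_sym S j l : Sget S j l = Sget S l j.
Proof.
unfold Sget. destruct (Nat.leb_spec j l), (Nat.leb_spec l j); auto; try lia.
replace j with l by lia. auto.
Qed.

Lemma Sget_in S j l : (j <= l)%nat -> Sget S j l = S j l.
Proof. intros H; unfold Sget. destruct (Nat.leb_spec j l); auto; lia. Qed.

Lemma Sget_lin S1 S2 c d a b :
  Sget (fun x y => c * S1 x y + d * S2 x y) a b = c * Sget S1 a b + d * Sget S2 a b.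
Proof. unfold Sget; destruct (Nat.leb a b); auto. Qed.

Lemma Sget_eqT N u v a b : eqT N u v -> (a < N)%nat -> (b < N)%nat -> Sget u a b = Sget v a b.
Proof. intros H Ha Hb. unfold Sget. destruct (Nat.leb_spec a b); apply H; unfold inT; lia. Qed.

Lemma Sget_nonneg N w a b : (forall j l, inT N j l -> 0 <= w j l) ->
  (a < N)%nat -> (b < N)%nat -> 0 <= Sget w a b.
Proof. intros Hw Ha Hb; unfold Sget; destruct (Nat.leb_spec a b); apply Hw; unfold inT; lia. Qed.

Section ThetaPsi.
Variables (N : nat) (G : nat -> nat -> R) (Lam : nat -> R).
Hypothesis Gsym : forall j l, (j < N)%nat -> (l < N)%nat -> G j l = G l j.
Hypothesis Goff : forall j l, (j < N)%nat -> (l < N)%nat -> j <> l -> 0 <= G j l.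
Hypothesis Gdiag : forall j, (j < N)%nat ->
  G j j = - sumN N (fun l => if Nat.eqb l j then 0 else G j l).

Lemma Gamma_rowsum j : (j < N)%nat -> sumN N (fun n => G j n) = 0.
Proof.
intros H. pose proof (Gdiag j H) as H0.
rewrite (sumN_omit1 N (fun l => G j l)) in H0 by auto. cbv beta in H0. lra.
Qed.

(* Matrix form of Theta on a symmetric array V: since the rows of Gamma sum
   to zero, the sums over n outside {j, l} can be completed to full sums. *)
Definition theta_mx (V : nat -> nat -> R) (j l : nat) : R :=
  G j l * (V j j + V l l - 2 * V j l)
  + sumN N (fun n => G j n * V n l) + sumN N (fun n => V j n * G n l).

Lemma Theta_theta_mx S j l : (j < N)%nat -> (l < N)%nat -> Theta N G S j l = theta_mx (Sget S) j l.
Proof.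
intros Hj Hl. unfold Theta, theta_mx. set (V := Sget S).
set (h := fun n => G l n * (V j n - V j l) + G j n * (V n l - V j l)).
assert (Hh : sumN N h = sumN N (fun n => G j n * V n l) + sumN N (fun n => V j n * G n l)).
{ unfold h. rewrite sumN_add.
  assert (E1 : sumN N (fun n => G l n * (V j n - V j l)) = sumN N (fun n => V j n * G n l)).
  { transitivity (sumN N (fun n => 1 * (V j n * G n l) + (- V j l) * G l n)).
    { apply sumN_ext; intros n Hn; rewrite (Gsym l n) by auto; ring. }
    rewrite sumN_lin, Gamma_rowsum by auto. ring. }
  assert (E2 : sumN N (fun n => G j n * (V n l - V j l)) = sumN N (fun n => G j n * V n l)).
  { transitivity (sumN N (fun n => 1 * (G j n * V n l) + (- V j l) * G j n)).
    { apply sumN_ext; intros n Hn; ring. }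
    rewrite sumN_lin, Gamma_rowsum by auto. ring. }
  rewrite E1, E2; ring. }
destruct (Nat.eqb_spec j l) as [<-|hne].
- transitivity (2 * G j j * 0 * (V j j + V j j - 2 * V j j)
                + sumN N (fun n => if Nat.eqb n j then 0 else h n)).
  { f_equal. apply sumN_ext; intros n _. unfold h. destruct (Nat.eqb n j); simpl; auto. }
  rewrite sumN_omit1, Hh by auto. unfold h. ring.
- change (2 * G j l * 1 * (V j j + V l l - 2 * V j l)
          + sumN N (fun n => if (Nat.eqb n j || Nat.eqb n l)%bool then 0 else h n)
          = theta_mx V j l).
  rewrite sumN_omit2, Hh by auto. unfold h, theta_mx. rewrite (Gsym l j) by auto. ring.
Qed.

Lemma theta_mx_sym S j l : (j < N)%nat -> (l < N)%nat ->
  theta_mx (Sget S) j l = theta_mx (Sget S) l j.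
Proof.
intros Hj Hl. unfold theta_mx.
rewrite (Sget_sym S l j), (Gsym l j) by auto.
assert (E1 : sumN N (fun n => G j n * Sget S n l) = sumN N (fun n => Sget S l n * G n j)).
{ apply sumN_ext; intros n Hn. rewrite (Gsym j n), (Sget_sym S n l) by auto. ring. }
assert (E2 : sumN N (fun n => Sget S j n * G n l) = sumN N (fun n => G l n * Sget S n j)).
{ apply sumN_ext; intros n Hn. rewrite (Gsym l n), (Sget_sym S n j) by auto. ring. }
rewrite E1, E2. ring.
Qed.

Lemma Theta_sym S j l : (j < N)%nat -> (l < N)%nat -> Theta N G S j l = Theta N G S l j.
Proof. intros. rewrite !Theta_theta_mx by auto. apply theta_mx_sym; auto. Qed.

Lemma Aop_linear : linT N (Aop N G Lam).
Proof.
assert (Hlin : forall S1 S2 c d j l, (j < N)%nat -> (l < N)%nat ->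
  Theta N G (fun x y => c * S1 x y + d * S2 x y) j l = c * Theta N G S1 j l + d * Theta N G S2 j l).
{ intros S1 S2 c d j l Hj Hl. rewrite !Theta_theta_mx by auto. unfold theta_mx. rewrite !Sget_lin.
  rewrite !(sumN_ext N (fun n => G j n * Sget _ n l)
    (fun n => c * (G j n * Sget S1 n l) + d * (G j n * Sget S2 n l)))
    by (intros; rewrite Sget_lin; ring).
  rewrite !(sumN_ext N (fun n => Sget _ j n * G n l)
    (fun n => c * (Sget S1 j n * G n l) + d * (Sget S2 j n * G n l)))
    by (intros; rewrite Sget_lin; ring).
  rewrite !sumN_lin. ring. }
assert (Hext : forall S S' j l, eqT N S S' -> (j < N)%nat -> (l < N)%nat ->
  Theta N G S j l = Theta N G S' j l).
{ intros S S' j l H Hj Hl. rewrite !Theta_theta_mx by auto. unfold theta_mx.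
  rewrite !(Sget_eqT N S S') by auto.
  rewrite (sumN_ext N (fun n => G j n * Sget S n l) (fun n => G j n * Sget S' n l))
    by (intros; rewrite (Sget_eqT N S S'); auto).
  rewrite (sumN_ext N (fun n => Sget S j n * G n l) (fun n => Sget S' j n * G n l))
    by (intros; rewrite (Sget_eqT N S S'); auto).
  auto. }
unfold Aop, Psi. split; [|split].
- intros u v j l [H1 H2].
  rewrite (Hext _ (fun x y => 1 * u x y + 1 * v x y)) by (try (intros ? ? ?; ring); lia).
  rewrite Hlin by lia. ring.
- intros c u j l [H1 H2].
  rewrite (Hext _ (fun x y => c * u x y + 0 * u x y)) by (try (intros ? ? ?; ring); lia).
  rewrite Hlin by lia. ring.
- intros u v H j l [H1 H2].
  rewrite (Hext u v) by (auto; lia). rewrite (H j l) by (unfold inT; lia). auto.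
Qed.

(* For symmetric arrays U, V the form
   theta_form U V = sum_{j,l} U_jl theta_mx(V)_jl + sum_j U_jj theta_mx(V)_jj
   equals 2 <u, Theta v> when U = Sget u, V = Sget v (see ip_Theta).  Expanded,
   it is a combination of four sums, each symmetric in (U, V). *)
Definition diag_pair (U V : nat -> nat -> R) : R :=
  sumN N (fun j => sumN N (fun l => U j l * G j l * V j j)).
Definition edge_pair (U V : nat -> nat -> R) : R :=
  sumN N (fun j => sumN N (fun l => U j l * G j l * V j l)).
Definition left_mix (U V : nat -> nat -> R) : R :=
  sumN N (fun j => sumN N (fun l => sumN N (fun n => U j l * (G j n * V n l)))).
Definition right_mix (U V : nat -> nat -> R) : R :=
  sumN N (fun j => sumN N (fun l => sumN N (fun n => U j l * (V j n * G n l)))).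
Definition theta_form (U V : nat -> nat -> R) : R :=
  sumN N (fun j => sumN N (fun l => U j l * theta_mx V j l)) + sumN N (fun j => U j j * theta_mx V j j).

Lemma theta_form_split U V : (forall a b, U a b = U b a) -> (forall a b, V a b = V b a) ->
  theta_form U V = 2 * diag_pair U V + 2 * diag_pair V U - 2 * edge_pair U V
                   + left_mix U V + right_mix U V.
Proof.
intros Us Vs. unfold theta_form.
assert (Eoff : sumN N (fun j => sumN N (fun l => U j l * theta_mx V j l)) =
  diag_pair U V + sumN N (fun j => sumN N (fun l => U j l * G j l * V l l))
  + (-2) * edge_pair U V + left_mix U V + right_mix U V).
{ unfold diag_pair, edge_pair, left_mix, right_mix. rewrite <- sumN_scal, <- !sumN_add.
  apply sumN_ext; intros j Hj. rewrite <- sumN_scal, <- !sumN_add.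
  apply sumN_ext; intros l Hl. unfold theta_mx. rewrite !sumN_scal. ring. }
(* swapping j and l turns the second sum into diag_pair U V *)
assert (Eswap : sumN N (fun j => sumN N (fun l => U j l * G j l * V l l)) = diag_pair U V).
{ unfold diag_pair. rewrite sumN_exch. apply sumN_ext; intros j Hj. apply sumN_ext; intros l Hl.
  rewrite (Us l j), (Gsym l j) by auto. auto. }
assert (Ediag : sumN N (fun j => U j j * theta_mx V j j) = 2 * diag_pair V U).
{ transitivity (sumN N (fun j => 2 * sumN N (fun l => V j l * G j l * U j j))).
  - apply sumN_ext; intros j Hj. unfold theta_mx. rewrite <- sumN_scal.
    transitivity (sumN N (fun n => U j j * (G j n * V n j)) + sumN N (fun n => U j j * (V j n * G n j))).
    { rewrite !sumN_scal. ring. }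
    rewrite <- sumN_add. apply sumN_ext; intros n Hn. rewrite (Vs n j), (Gsym n j) by auto. ring.
  - unfold diag_pair. rewrite sumN_scal. auto. }
rewrite Eoff, Eswap, Ediag. ring.
Qed.

Lemma edge_pair_sym U V : edge_pair U V = edge_pair V U.
Proof. unfold edge_pair. apply sumN_ext; intros; apply sumN_ext; intros; ring. Qed.

Lemma left_mix_sym U V : left_mix U V = left_mix V U.
Proof.
unfold left_mix.
transitivity (sumN N (fun j => sumN N (fun n => sumN N (fun l => U j l * (G j n * V n l))))).
{ apply sumN_ext; intros; apply sumN_exch. }
rewrite sumN_exch.
apply sumN_ext; intros n Hn. rewrite sumN_exch. apply sumN_ext; intros l Hl.
apply sumN_ext; intros j Hj. rewrite (Gsym j n) by auto. ring.
Qed.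

Lemma right_mix_sym U V : right_mix U V = right_mix V U.
Proof.
unfold right_mix. apply sumN_ext; intros j Hj. rewrite sumN_exch.
apply sumN_ext; intros l Hl. apply sumN_ext; intros n Hn. rewrite (Gsym l n) by auto. ring.
Qed.

Lemma theta_form_sym U V : (forall a b, U a b = U b a) -> (forall a b, V a b = V b a) ->
  theta_form U V = theta_form V U.
Proof.
intros Us Vs. rewrite !theta_form_split by auto.
rewrite (edge_pair_sym U V), (left_mix_sym U V), (right_mix_sym U V). ring.
Qed.

Lemma ip_Theta u v : ipT N u (Theta N G v) = theta_form (Sget u) (Sget v) / 2.
Proof.
unfold ipT, theta_form.
rewrite (sumT_ext N _ (fun j l => Sget u j l * theta_mx (Sget v) j l))
  by (intros j l [H1 H2]; rewrite Sget_in, Theta_theta_mx by lia; auto).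
rewrite (sumN_square_sym N (fun j l => Sget u j l * theta_mx (Sget v) j l)).
- field.
- intros j l Hj Hl. rewrite Sget_sym, theta_mx_sym by auto. auto.
Qed.

(* Theta is symmetric by theta_form_sym, and Psi is diagonal. *)
Lemma Aop_symmetric : symT N (Aop N G Lam).
Proof.
intros u v.
assert (Esplit : forall x y, ipT N x (Aop N G Lam y) =
  1 * ipT N x (Theta N G y) + (-1) * sumT N (fun j l => (Lam j + Lam l) * (x j l * y j l))).
{ intros x y. unfold ipT, Aop, Psi. rewrite <- sumT_lin. apply sumT_ext; intros; ring. }
rewrite Esplit, (ip_sym N (Aop N G Lam u) v), Esplit, !ip_Theta, (theta_form_sym (Sget u) (Sget v))
  by (intros; apply Sget_sym).
f_equal. f_equal. apply sumT_ext; intros; ring.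
Qed.

(* Where x vanishes, Theta x collects only nonnegative gains: from the
   diagonal entries x_jj, x_ll through the edge (j, l), and from the
   neighbouring entries x_jn, x_nl through the edges (l, n), (j, n). *)
Definition edge_gain (x : vec) (j l : nat) : R :=
  2 * G j l * (if Nat.eqb j l then 0 else 1) * (Sget x j j + Sget x l l).
Definition path_gain (x : vec) (j l n : nat) : R :=
  if (Nat.eqb n j || Nat.eqb n l)%bool then 0 else G l n * Sget x j n + G j n * Sget x n l.

Lemma Theta_at_zero x j l : Sget x j l = 0 ->
  Theta N G x j l = edge_gain x j l + sumN N (path_gain x j l).
Proof.
intros H. unfold Theta, edge_gain, path_gain. rewrite H. f_equal; [ring|].
apply sumN_ext; intros n _. destruct (Nat.eqb n j || Nat.eqb n l)%bool; auto. ring.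
Qed.

Section Gains.
Variable x : vec.
Hypothesis Hx : forall a b, inT N a b -> 0 <= x a b.

Lemma edge_gain_ge0 j l : (j < N)%nat -> (l < N)%nat -> 0 <= edge_gain x j l.
Proof.
intros Hj Hl. unfold edge_gain. destruct (Nat.eqb_spec j l) as [_|Hne]; [lra|].
pose proof (Goff j l Hj Hl Hne). pose proof (Sget_nonneg N x j j Hx Hj Hj).
pose proof (Sget_nonneg N x l l Hx Hl Hl). nra.
Qed.

Lemma path_gain_ge0 j l n : (j < N)%nat -> (l < N)%nat -> (n < N)%nat -> 0 <= path_gain x j l n.
Proof.
intros Hj Hl Hn. unfold path_gain.
destruct (Nat.eqb_spec n j), (Nat.eqb_spec n l); simpl; try lra.
pose proof (Goff l n Hl Hn ltac:(auto)). pose proof (Goff j n Hj Hn ltac:(auto)).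
pose proof (Sget_nonneg N x j n Hx Hj Hn). pose proof (Sget_nonneg N x n l Hx Hn Hl). nra.
Qed.

Lemma path_gains_ge0 j l : (j < N)%nat -> (l < N)%nat -> 0 <= sumN N (path_gain x j l).
Proof. intros. apply sumN_ge0; intros; apply path_gain_ge0; auto. Qed.
End Gains.

Hypothesis Lpos : forall j, (j < N)%nat -> 0 <= Lam j.

(* Psi contributes nothing where x vanishes, and the gains are nonnegative. *)
Lemma Aop_cooperative : cooperative N (Aop N G Lam).
Proof.
intros x j l Hx [H1 H2] H0. unfold Aop, Psi. rewrite H0, Rmult_0_r, Rminus_0_r.
rewrite Theta_at_zero by (rewrite Sget_in; [auto | lia]).
pose proof (edge_gain_ge0 x Hx j l ltac:(lia) ltac:(lia)).
pose proof (path_gains_ge0 x Hx j l ltac:(lia) ltac:(lia)). lra.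
Qed.

Hypothesis Girr : irreducible N G.

(* Zeros of a nonnegative eigenvector propagate along the edges of Gamma:
   at a zero, Theta w vanishes, so every gain vanishes. *)
Section ZeroPropagation.
Variables (w : vec) (lam : R).
Hypothesis Hw0 : forall a b, inT N a b -> 0 <= w a b.
Hypothesis Hweig : eigvec N (Aop N G Lam) lam w.

Lemma Theta_eigvec_zero j l : (j < N)%nat -> (l < N)%nat -> Sget w j l = 0 -> Theta N G w j l = 0.
Proof.
intros Hj Hl H.
assert (K : forall a b, (a <= b)%nat -> (b < N)%nat -> w a b = 0 -> Theta N G w a b = 0).
{ intros a b Hab Hb Hz. pose proof (Hweig a b ltac:(unfold inT; lia)) as E.
  unfold Aop, Psi in E. rewrite Hz in E. lra. }
destruct (Nat.leb_spec j l).
- apply K; auto. rewrite <- H, Sget_in; auto.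
- rewrite Theta_sym by auto. apply K; try lia. rewrite Sget_sym, Sget_in in H by lia. auto.
Qed.

Lemma zero_step j l n : (j < N)%nat -> (l < N)%nat -> (n < N)%nat -> l <> n -> 0 < G l n ->
  Sget w j l = 0 -> Sget w j n = 0.
Proof.
intros Hj Hl Hn Hln HG H.
pose proof (Theta_eigvec_zero j l Hj Hl H) as E. rewrite Theta_at_zero in E by auto.
pose proof (edge_gain_ge0 w Hw0 j l Hj Hl) as P0.
pose proof (path_gains_ge0 w Hw0 j l Hj Hl) as P1.
assert (Z0 : edge_gain w j l = 0) by lra.
assert (Z1 : sumN N (path_gain w j l) = 0) by lra.
pose proof (Sget_nonneg N w j n Hw0 Hj Hn).
destruct (Nat.eqb_spec n j) as [->|hnj].
- (* n = j: the edge gain contains G_jl w_jj *)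
  unfold edge_gain in Z0. destruct (Nat.eqb_spec j l); [lia|].
  rewrite (Gsym j l) in Z0 by auto.
  pose proof (Sget_nonneg N w l l Hw0 Hl Hl). nra.
- (* n <> j: the path gain through n contains G_ln w_jn *)
  pose proof (sumN_eq0 N (path_gain w j l) ltac:(intros; apply path_gain_ge0; auto) Z1 n Hn) as Zn.
  unfold path_gain in Zn. destruct (Nat.eqb_spec n j); [lia|]. destruct (Nat.eqb_spec n l); [lia|].
  simpl in Zn. pose proof (Goff j n Hj Hn ltac:(auto)).
  pose proof (Sget_nonneg N w n l Hw0 Hn Hl). nra.
Qed.

Lemma zero_reach j l l' : reach N G l l' -> (j < N)%nat -> (l < N)%nat ->
  Sget w j l = 0 -> Sget w j l' = 0.
Proof.
intros R; induction R as [l|l k l'' Hl Hk Hne HG R IH]; intros Hj Hl' H; auto.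
apply IH; auto. apply (zero_step j l k); auto.
Qed.

Lemma zero_everywhere j l : inT N j l -> w j l = 0 -> forall a b, inT N a b -> w a b = 0.
Proof.
intros [H1 H2] H a b [H3 H4].
assert (E1 : Sget w j b = 0)
  by (apply (zero_reach j l b); try rewrite Sget_in; auto; try lia; apply Girr; lia).
rewrite Sget_sym in E1.
assert (E2 : Sget w b a = 0) by (apply (zero_reach b j a); auto; try lia; apply Girr; lia).
rewrite Sget_sym, Sget_in in E2 by lia. auto.
Qed.
End ZeroPropagation.

Lemma Aop_irreducible : irreducible_op N (Aop N G Lam).
Proof. intros w lam Hw He. apply (zero_everywhere w lam Hw He). Qed.
End ThetaPsi.

Lemma cW_quadratic_form N (W : vec) (q : nat -> R) :
  sumT N (fun j l => W j l * ((2 - kdelta j l) * q j * q l))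
  = sumN N (fun j => sumN N (fun l => Sget W j l * q j * q l)).
Proof.
set (f := fun j l => Sget W j l * q j * q l).
transitivity (2 * sumT N f - sumN N (fun j => f j j)).
2:{ symmetry. apply (sumN_square_sym N f). intros; unfold f; rewrite Sget_sym; ring. }
assert (Ediag : sumT N (fun j l => kdelta j l * f j l) = sumN N (fun j => f j j)).
{ unfold sumT. apply sumN_ext; intros l Hl.
  rewrite (sumN_ext _ _ (fun j => if Nat.eqb j l then f j l else 0))
    by (intros j _; unfold kdelta; destruct (Nat.eqb j l); ring).
  rewrite sumN_delta. replace (Nat.ltb l (l + 1)) with true by (symmetry; apply Nat.ltb_lt; lia).
  auto. }
rewrite <- Ediag, <- (Rmult_1_l (sumT N (fun j l => kdelta j l * f j l))).
replace (2 * sumT N f - 1 * sumT N (fun j l => kdelta j l * f j l))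
  with (2 * sumT N f + (-1) * sumT N (fun j l => kdelta j l * f j l)) by ring.
rewrite <- sumT_lin. apply sumT_ext; intros j l [H1 H2]. unfold f. rewrite Sget_in by auto. ring.
Qed.

Theorem mainTheorem5 (N : nat) (G : nat -> nat -> R) (Lam : nat -> R)
  (HN : (2 <= N)%nat)
  (Gsym : forall j l, (j < N)%nat -> (l < N)%nat -> G j l = G l j)
  (Goff : forall j l, (j < N)%nat -> (l < N)%nat -> j <> l -> 0 <= G j l)
  (Gdiag : forall j, (j < N)%nat ->
     G j j = - sumN N (fun l => if Nat.eqb l j then 0 else G j l))
  (Lpos : forall j, (j < N)%nat -> 0 <= Lam j)
  (Girr : irreducible N G) :
  exists (mu : R) (W : vec),
    (* -mu is the largest eigenvalue of Theta - Psi, simple, eigenvector W *)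
    simple_eigen N (Aop N G Lam) (- mu) W /\
    (forall a b, is_eigenvalue N (Aop N G Lam) a b -> a <= - mu) /\
    (* W is a unit vector with strictly positive components *)
    sumT N (fun j l => W j l ^ 2) = 1 /\
    (forall j l, inT N j l -> 0 < W j l) /\
    (* asymptotics of S(z) = exp((Theta - Psi) z) S(0) *)
    (forall S : R -> vec,
       (forall z j l, inT N j l ->
          derivable_pt_lim (fun t => S t j l) z (Aop N G Lam (S z) j l)) ->
       (forall j l, inT N j l -> 0 <= S 0 j l) ->
       (exists j l, inT N j l /\ S 0 j l <> 0) ->
       0 < sumT N (fun j l => W j l * S 0 j l) /\
       exists eps : R -> vec,
         (forall j l, inT N j l ->
            forall e, 0 < e -> exists Z, forall z, Z <= z -> Rabs (eps z j l) < e) /\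
         (forall z j l, inT N j l ->
            S z j l = sumT N (fun j' l' => W j' l' * S 0 j' l') * W j l
                      * exp (- mu * z) * (1 + eps z j l))) /\
    (* the particular initial condition S_jl(0) = (2 - delta_jl) q_j q_l *)
    (forall q : nat -> R,
       (forall j, (j < N)%nat -> 0 <= q j) ->
       (exists j, (j < N)%nat /\ q j <> 0) ->
       sumT N (fun j l => W j l * ((2 - kdelta j l) * q j * q l))
       = sumN N (fun j => sumN N (fun l => Sget W j l * q j * q l))).
Proof.
assert (N0 : (0 < N)%nat) by lia.
set (A := Aop N G Lam).
assert (hM : linT N A) by (apply Aop_linear; auto).
assert (hS : symT N A) by (apply Aop_symmetric; auto).
assert (hC : cooperative N A) by (apply Aop_cooperative; auto).
assert (hI : irreducible_op N A) by (apply Aop_irreducible; auto).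
destruct (perron_frobenius N A hM hS hC hI N0) as [lam [W [HWp [HW1 [HW [Hub Hsimp]]]]]].
destruct (spectral_gap N A hM hS lam W N0 HW1 HW Hub Hsimp) as [lam2 [Hlt Hgap]].
exists (- lam), W. rewrite Ropp_involutive.
split; [split; [|split] | split; [|split; [|split; [|split]]]].
- exists 0%nat, 0%nat. assert (H00 : inT N 0 0) by (unfold inT; lia).
  specialize (HWp 0%nat 0%nat H00). split; [auto | lra].
- exact HW.
- intros v Hv. apply Hsimp, (generalized_eigvec N A hS lam (dimT N)); auto.
  unfold dimT. apply Nat.div_str_pos. nia.
- intros a b. apply (complex_eigenvalue_le N A); auto.
- rewrite <- HW1. apply sumT_ext; intros; ring.
- exact HWp.
- intros S HS HS0 Hnz. replace (- - lam) with lam by ring.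
  apply (solution_asymptotics N A lam lam2 W hM hS HW1 HW Hgap S HS Hlt HWp HS0 Hnz).
- intros q _ _. apply cW_quadratic_form.
Qed.
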